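(* Let $R$ be a ring with unity and involution $*$, and let $a\in R$. The following statements are equivalent. (1) $a$ is left dual core invertible. (2) $a$ is left dual $(a,a)$-core invertible. (3) $a$ is left dual $(a,1)$-core invertible. (4) $1$ is left dual $(a,a)$-core invertible. (5) $a$ is left dual $a$-core invertible. (6) $a$ is left dual $1$-core invertible. (7) $a$ is left $(a^*,a)$-invertible.
   Context: An element $a$ is left dual core invertible if there exists $x\in R$ with $axa=a$, $(xa)^*=xa$ and $x^2a=x$. For $u,b,c\in R$, $u$ is left dual $(b,c)$-core invertible if there exists $x\in Rc$ with $bxub=b$ and $(xub)^*=xub$. For $v\in R$, $a$ is left dual $v$-core invertible if there exists $x\in R$ with $axva=a$, $(xva)^*=xva$ and $x^2va=x$. For $u,b,c\in R$, $u$ is left $(b,c)$-invertible if $b\in Rcub$. *)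

From mathcomp Require Import all_boot all_algebra.
Set Implicit Arguments. Unset Strict Implicit. Unset Printing Implicit Defensive.
Import GRing.Theory.
Local Open Scope ring_scope.

Definition involution (R : pzRingType) (star : R -> R) : Prop :=
  [/\ forall x, star (star x) = x,
      forall x y, star (x + y) = star x + star y
    & forall x y, star (x * y) = star y * star x].

Definition left_dual_core_inv (R : pzRingType) (star : R -> R) (a : R) : Prop :=
  exists x : R, [/\ a * x * a = a, star (x * a) = x * a & x ^+ 2 * a = x].

Definition left_dual_bc_core_inv (R : pzRingType) (star : R -> R) (b c u : R) : Prop :=
  exists x : R, [/\ exists r : R, x = r * c,
                    b * x * u * b = b & star (x * u * b) = x * u * b].

Definition left_dual_v_core_inv (R : pzRingType) (star : R -> R) (v a : R) : Prop :=
  exists x : R, [/\ a * x * v * a = a, star (x * v * a) = x * v * a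
                  & x ^+ 2 * v * a = x].

Definition left_bc_inv (R : pzRingType) (b c u : R) : Prop :=
  exists r : R, b = r * c * u * b.

From mathcomp Require Import all_boot all_algebra.
Local Open Scope ring_scope.
Import GRing.Theory.

Set Implicit Arguments.
Unset Strict Implicit.
Unset Printing Implicit Defensive.

(* All seven conditions produce, or are produced by, an x with a x a = a,
   (x a)^* = x a and x^2 a = x; the witnesses are moved around by absorbing a
   factor with a x a = a or x^2 a = x.  For the (a^*, a)-invertibility
   a^* = r a a a^*, applying the involution gives a = a a^* (r a)^*, hence
   r a a = a^* (r a)^* = (r a a)^* and a (r a a) = a, so x := r a works;
   conversely a^* = (a x a)^* = x a a^* = x^2 a a a^*. *)

Section LeftDualCoreInverse.

Variables (R : pzRingType) (star : R -> R).

Lemma left_dual_bc_core_inv_rdvd (b c d u : R) :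
  (exists s, c = s * d) ->
  left_dual_bc_core_inv star b c u -> left_dual_bc_core_inv star b d u.
Proof.
move=> [s ->] [x [[r ->] bxub sa]]; exists (r * (s * d)); split => //.
by exists (r * s); rewrite mulrA.
Qed.

Lemma left_dual_bc_core_inv_mulr (b c u : R) :
  left_dual_bc_core_inv star b c u -> left_dual_bc_core_inv star b (c * u) 1.
Proof.
move=> [x [[r ->] bxub sa]]; rewrite !mulrA in bxub.
exists (r * (c * u)); rewrite !mulr1 !mulrA; split => //.
by exists r; rewrite mulrA.
Qed.

Lemma left_dual_core_inv_v1 (a : R) :
  left_dual_core_inv star a <-> left_dual_v_core_inv star 1 a.
Proof. by split=> -[x xP]; exists x; rewrite !mulr1 in xP *. Qed.

Lemma left_dual_core_inv_v_self (a : R) :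
  left_dual_core_inv star a -> left_dual_v_core_inv star a a.
Proof.
move=> [x [axa sxa]]; rewrite expr2 => xxa.
have xxaa : x * x * a * a = x * a by rewrite xxa.
exists (x * x); split.
- have -> : a * (x * x) * a * a = a * (x * x * a * a) by rewrite !mulrA.
  by rewrite xxaa mulrA axa.
- by rewrite xxaa.
- have -> : (x * x) ^+ 2 * a * a = x * (x * (x * x * a * a)) by rewrite expr2 !mulrA.
  by rewrite xxaa [x * (x * a)]mulrA xxa.
Qed.

Lemma left_dual_v_core_inv_bc (v a : R) :
  left_dual_v_core_inv star v a -> left_dual_bc_core_inv star a a v.
Proof.
move=> [y [ayva syva yyva]]; exists y; split => //.
by exists (y ^+ 2 * v); rewrite yyva.
Qed.

Lemma left_dual_bc_core_inv1_core (a : R) :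
  left_dual_bc_core_inv star a a 1 -> left_dual_core_inv star a.
Proof.
move=> [_ [[r ->]]]; rewrite !mulr1 => araa sraa.
exists (r * a); split => //.
have -> : (r * a) ^+ 2 * a = r * (a * (r * a) * a) by rewrite expr2 !mulrA.
by rewrite araa.
Qed.

Lemma left_dual_bc_core_inv1r (b c : R) :
  left_dual_bc_core_inv star b c b -> left_dual_bc_core_inv star b 1 b.
Proof. by apply: left_dual_bc_core_inv_rdvd; exists c; rewrite mulr1. Qed.

Lemma left_dual_bc_core_inv_core (a : R) :
  left_dual_bc_core_inv star a a a -> left_dual_core_inv star a.
Proof.
move/left_dual_bc_core_inv1r/left_dual_bc_core_inv_mulr.
by rewrite mul1r => /left_dual_bc_core_inv1_core.
Qed.

Lemma left_dual_core_inv_left_bc_inv (a : R) : involution star ->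
  left_dual_core_inv star a <-> left_bc_inv (star a) a a.
Proof.
move=> [starK _ starM]; split.
- move=> [x [axa sxa]]; rewrite expr2 => xxa.
  have sa : star a = x * a * star a by rewrite -{1}axa -mulrA starM sxa.
  by exists (x * x); rewrite {1}sa -{1}xxa.
- move=> [r sa].
  have a_eq : a = a * star a * star (r * a).
    by rewrite -{1}(starK a) {1}sa !starM starK mulrA.
  have raa_eq : r * a * a = star a * star (r * a).
    by rewrite {2}a_eq !mulrA -sa.
  have araa : a * (r * a * a) = a by rewrite raa_eq mulrA -a_eq.
  exists (r * a); split.
  + by rewrite -mulrA araa.
  + by rewrite raa_eq starM !starK.
  + have -> : (r * a) ^+ 2 * a = r * (a * (r * a * a)) by rewrite expr2 !mulrA.
    by rewrite araa.
Qed.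

End LeftDualCoreInverse.

Theorem corollary3p6 (R : pzRingType) (star : R -> R) (a : R) :
  involution star ->
  [<-> left_dual_core_inv star a;
       left_dual_bc_core_inv star a a a;
       left_dual_bc_core_inv star a 1 a;
       left_dual_bc_core_inv star a a 1;
       left_dual_v_core_inv star a a;
       left_dual_v_core_inv star 1 a;
       left_bc_inv (star a) a a].
Proof.
move=> star_inv; tfae.
- by move/left_dual_core_inv_v_self/left_dual_v_core_inv_bc.
- exact: left_dual_bc_core_inv1r.
- by move/left_dual_bc_core_inv_mulr; rewrite mul1r.
- by move/left_dual_bc_core_inv1_core/left_dual_core_inv_v_self.
- by move/left_dual_v_core_inv_bc/left_dual_bc_core_inv_core/left_dual_core_inv_v1.
- by move/left_dual_core_inv_v1/(left_dual_core_inv_left_bc_inv _ star_inv).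
- by move/(left_dual_core_inv_left_bc_inv _ star_inv).
Qed.
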